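(* Let $U_e=U_f=U\ge0$, $\beta<-2$, $\kappa_g\ge16$, $\alpha\le 2\min\{\beta,-3\}-1$, and let $g$ be the deterministic source. Let $V_k,W_k$ ($k\ne0$) be any complex numbers with $|V_k|,|W_k|\le\Xi$, $V_{-k}=\overline{V_k}$, $W_{-k}=\overline{W_k}$, and define $$\vartheta_k:=i|k|^{-2}\sum_{j\notin\{0,k\}}|k-j|^\beta\gamma_j\,U\big[(e_{k-j}\cdot j)V_{k-j}+(f_{k-j}\cdot j)W_{k-j}\big].$$ Then there is a constant $C<\infty$ depending only on $(\gamma_k)$, $c_g$, $\kappa_g$, $\alpha$, $\beta$ such that for all $k\ne0$, $$|\vartheta_k|\le C\,U\Xi\,|k|^{-2}K_\beta(|k|),\qquad K_\beta(s):=\min\{1,(s/(2\kappa_g))^{\beta}\}.$$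
   Context: Craya–Herring basis: for $k=(k_x,k_y,k_z)\in\mathbb Z^3$ with $|k_h|:=\sqrt{k_x^2+k_y^2}>0$, $e_k=(k_y,-k_x,0)/|k_h|$, $f_k=(k_xk_z,k_yk_z,-|k_h|^2)/(|k||k_h|)$; for $k\ne0$ on the $z$-axis, a fixed orthonormal pair of unit vectors orthogonal to $k$. Source coefficients: complex $\gamma_k$ ($k\in\mathbb Z^3\setminus\{0\}$), $\gamma_{-k}=\overline{\gamma_k}$, with constants $c_g\ge0$, $\kappa_g>1$, $\alpha<0$ such that $|\gamma_k|\le c_g|k|^\alpha$ for $|k|\ge\kappa_g$ (the deterministic source is $\Delta^{-1}g=\sum_{k\ne0}\gamma_ke^{ik\cdot x}$ on $[0,2\pi]^3$, and $\vartheta=-\Delta^{-1}(u\cdot\nabla\Delta^{-1}g)$ for $u=\sum_{k\ne0}|k|^\beta U[e_kV_k+f_kW_k]e^{ik\cdot x}$). *)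

From Stdlib Require Import Reals ZArith List.
From Coquelicot Require Import Coquelicot.
Import ListNotations.
Open Scope R_scope.

Definition Z3 := (Z * Z * Z)%type.
Definition zx (k : Z3) : Z := fst (fst k).
Definition zy (k : Z3) : Z := snd (fst k).
Definition zz (k : Z3) : Z := snd k.
Definition z3 (a b c : Z) : Z3 := (a, b, c).
Definition Z3zero : Z3 := z3 0 0 0.
Definition Z3neg (k : Z3) : Z3 := z3 (- zx k) (- zy k) (- zz k).
Definition Z3sub (k j : Z3) : Z3 := z3 (zx k - zx j) (zy k - zy j) (zz k - zz j).
Definition Z3eqb (k j : Z3) : bool :=
  (Z.eqb (zx k) (zx j) && Z.eqb (zy k) (zy j) && Z.eqb (zz k) (zz j))%bool.

Definition knorm (k : Z3) : R :=
  sqrt (IZR (zx k) ^ 2 + IZR (zy k) ^ 2 + IZR (zz k) ^ 2).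
Definition khnorm (k : Z3) : R := sqrt (IZR (zx k) ^ 2 + IZR (zy k) ^ 2).

Definition vec := (R * R * R)%type.
Definition vx (v : vec) : R := fst (fst v).
Definition vy (v : vec) : R := snd (fst v).
Definition vz (v : vec) : R := snd v.
Definition vdot (v w : vec) : R := vx v * vx w + vy v * vy w + vz v * vz w.
Definition vdotZ (v : vec) (j : Z3) : R :=
  vx v * IZR (zx j) + vy v * IZR (zy j) + vz v * IZR (zz j).

(* The fixed orthonormal pair used for k = (0,0,kz) on the z-axis:
   ez kz, fz kz are unit vectors, mutually orthogonal, orthogonal to (0,0,1)
   (hence to k). *)
Definition valid_axis_basis (ez fz : Z -> vec) : Prop :=
  forall kz : Z,
    vdot (ez kz) (ez kz) = 1 /\ vdot (fz kz) (fz kz) = 1 /\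
    vdot (ez kz) (fz kz) = 0 /\ vz (ez kz) = 0 /\ vz (fz kz) = 0.

Definition on_z_axis (k : Z3) : bool :=
  (Z.eqb (zx k) 0 && Z.eqb (zy k) 0)%bool.

Definition e_vec (ez : Z -> vec) (k : Z3) : vec :=
  if on_z_axis k then ez (zz k)
  else (IZR (zy k) / khnorm k, - IZR (zx k) / khnorm k, 0).
Definition f_vec (fz : Z -> vec) (k : Z3) : vec :=
  if on_z_axis k then fz (zz k)
  else (IZR (zx k) * IZR (zz k) / (knorm k * khnorm k),
        IZR (zy k) * IZR (zz k) / (knorm k * khnorm k),
        - (khnorm k ^ 2) / (knorm k * khnorm k)).

Definition zrange (N : nat) : list Z :=
  map (fun n => (Z.of_nat n - Z.of_nat N)%Z) (seq 0 (2 * N + 1)).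
Definition box (N : nat) : list Z3 :=
  list_prod (list_prod (zrange N) (zrange N)) (zrange N).

Definition Csum (l : list C) : C := fold_right Cplus (RtoC 0) l.

Definition theta_term (ez fz : Z -> vec) (gamma V W : Z3 -> C)
    (beta U : R) (k j : Z3) : C :=
  let m := Z3sub k j in
  RtoC (Rpower (knorm m) beta) * gamma j * RtoC U *
  (RtoC (vdotZ (e_vec ez m) j) * V m + RtoC (vdotZ (f_vec fz m) j) * W m).

Definition theta_partial (ez fz : Z -> vec) (gamma V W : Z3 -> C)
    (beta U : R) (k : Z3) (N : nat) : C :=
  Ci * RtoC (/ (knorm k ^ 2)) *
  Csum (map (theta_term ez fz gamma V W beta U k)
          (filter (fun j => negb (Z3eqb j Z3zero) && negb (Z3eqb j k))%bool
             (box N))).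

Definition Kbeta (kappa beta s : R) : R := Rmin 1 (Rpower (s / (2 * kappa)) beta).

From Stdlib Require Import Reals ZArith List Lra Lia Psatz.
From Coquelicot Require Import Coquelicot.
Open Scope R_scope.

(* Each summand is at most 2 U Xi |k-j|^beta |gamma_j| |j| <= 2 U Xi D |k-j|^beta |j|^p with
   p = alpha + 1 <= min(beta, -6).  Since |j| + |k-j| >= |k|, one of |j|, |k-j| is at least
   |k|/2, which gives |k-j|^beta |j|^p <= (|k|/2)^beta (|j|^-6 + |k-j|^-6).  The lattice
   function |j|^-6 is dominated by the product weight prod_i (1 + j_i^2)^-1, whose sums over
   (shifted) boxes are at most 6^3.  So the series converges absolutely along the boxes
   [-N,N]^3, with limit bounded by a multiple of |k|^-2 (|k|/2)^beta <= 2^-beta |k|^-2 K_beta(|k|). *)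

Definition Rsum (l : list R) : R := fold_right Rplus 0 l.

Lemma Rsum_app (l1 l2 : list R) : Rsum (l1 ++ l2) = Rsum l1 + Rsum l2.
Proof. induction l1 as [|x l1 IH]; simpl; [lra | rewrite IH; lra]. Qed.

Lemma Rsum_scal {A} (g : A -> R) c l :
  Rsum (map (fun x => c * g x) l) = c * Rsum (map g l).
Proof. induction l as [|x l IH]; simpl; [ring | rewrite IH; ring]. Qed.

Lemma Rsum_plus {A} (f g : A -> R) l :
  Rsum (map (fun x => f x + g x) l) = Rsum (map f l) + Rsum (map g l).
Proof. induction l as [|x l IH]; simpl; [ring | rewrite IH; ring]. Qed.

Lemma Rsum_prod {A B} (f : A -> R) (g : B -> R) l1 l2 :
  Rsum (map (fun p => f (fst p) * g (snd p)) (list_prod l1 l2)) =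
  Rsum (map f l1) * Rsum (map g l2).
Proof.
  induction l1 as [|a l1 IH]; simpl; [ring|].
  rewrite map_app, Rsum_app, IH, map_map; simpl.
  rewrite (Rsum_scal g (f a)); ring.
Qed.

Lemma Rsum_nonneg {A} (g : A -> R) l : (forall x, 0 <= g x) -> 0 <= Rsum (map g l).
Proof. intros H; induction l as [|x l IH]; simpl; [lra | specialize (H x); lra]. Qed.

Lemma Rsum_le {A} (f g : A -> R) l :
  (forall x, In x l -> f x <= g x) -> Rsum (map f l) <= Rsum (map g l).
Proof.
  induction l as [|x l IH]; simpl; intros H; [lra|].
  assert (f x <= g x) by auto.
  assert (Rsum (map f l) <= Rsum (map g l)) by auto.
  lra.
Qed.

Lemma Rsum_filter_le {A} (g : A -> R) P l :
  (forall x, 0 <= g x) -> Rsum (map g (filter P l)) <= Rsum (map g l).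
Proof.
  intros H; induction l as [|x l IH]; simpl; [lra|].
  specialize (H x); destruct (P x); simpl; lra.
Qed.

Lemma Rsum_elem_le {A} (g : A -> R) l x :
  (forall x, 0 <= g x) -> In x l -> g x <= Rsum (map g l).
Proof.
  intros H; induction l as [|y l IH]; simpl; [tauto|]. intros [->|Hx].
  - pose proof (Rsum_nonneg g l H); lra.
  - specialize (IH Hx); specialize (H y); lra.
Qed.

Lemma Rsum_incl_le {A} (g : A -> R) (l1 l2 : list A) :
  (forall x, 0 <= g x) -> NoDup l1 -> incl l1 l2 ->
  Rsum (map g l1) <= Rsum (map g l2).
Proof.
  intros Hg Hnd; revert l2.
  induction Hnd as [|a l1 Ha _ IH]; intros l2 Hincl; [apply Rsum_nonneg; auto|].
  destruct (in_split a l2) as [l2a [l2b ->]]; [apply Hincl; now left|].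
  assert (Hrest : incl l1 (l2a ++ l2b)).
  { intros y Hy.
    assert (Hy' : In y (l2a ++ a :: l2b)) by (apply Hincl; now right).
    apply in_app_or in Hy' as [? | [<- | ?]]; apply in_or_app; tauto. }
  specialize (IH _ Hrest). rewrite !map_app, !Rsum_app in *; simpl. lra.
Qed.

Lemma Cmod_Csum {A} (t : A -> C) l :
  Cmod (Csum (map t l)) <= Rsum (map (fun x => Cmod (t x)) l).
Proof.
  induction l as [|x l IH]; simpl; [rewrite Cmod_0; lra|].
  eapply Rle_trans; [apply Cmod_triangle | lra].
Qed.

Lemma Re_Csum {A} (t : A -> C) l : Re (Csum (map t l)) = Rsum (map (fun x => Re (t x)) l).
Proof. induction l as [|x l IH]; simpl; [reflexivity | now rewrite <- IH]. Qed.

Lemma Im_Csum {A} (t : A -> C) l : Im (Csum (map t l)) = Rsum (map (fun x => Im (t x)) l).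
Proof. induction l as [|x l IH]; simpl; [reflexivity | now rewrite <- IH]. Qed.

Lemma im_le_Cmod (z : C) : Rabs (Im z) <= Cmod z.
Proof.
  destruct z as [x y]; unfold Cmod; simpl.
  rewrite <- sqrt_Rsqr_abs; apply sqrt_le_1_alt; unfold Rsqr; nra.
Qed.

Lemma is_lim_seq_C (f : nat -> C) (a b : R) :
  is_lim_seq (fun n => Re (f n)) a -> is_lim_seq (fun n => Im (f n)) b ->
  filterlim f eventually (locally ((a, b) : C)).
Proof.
  intros Ha Hb P [eps Heps].
  apply is_lim_seq_spec in Ha, Hb.
  unfold filtermap; generalize (filter_and _ _ (Ha eps) (Hb eps)); apply filter_imp.
  intros n [H1 H2]; apply Heps.
  destruct (f n); split; assumption.
Qed.

Lemma filterlim_Cmod (z : C) : filterlim Cmod (locally z) (locally (Cmod z)).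
Proof.
  rewrite Cmod_norm.
  apply (filterlim_ext (F := locally (z : C_UniformSpace))
           (@norm _ (prod_NormedModule R_AbsRing R_NormedModule R_NormedModule))).
  - intros w; now rewrite Cmod_norm.
  - exact (@filterlim_norm _ (prod_NormedModule R_AbsRing R_NormedModule R_NormedModule) z).
Qed.

Section NestedSums.

Context {A : Type} (L : nat -> list A).
Hypothesis L_nodup : forall N, NoDup (L N).
Hypothesis L_incl : forall N, incl (L N) (L (S N)).

Lemma ex_finite_lim_Rsum_nonneg (g : A -> R) E :
  (forall x, 0 <= g x) -> (forall N, Rsum (map g (L N)) <= E) ->
  ex_finite_lim_seq (fun N => Rsum (map g (L N))).
Proof.
  intros Hg HE; apply ex_finite_lim_seq_incr with E; auto.
  intros N; apply Rsum_incl_le; auto.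
Qed.

(* [g = (h + g) - h] with both [h] and [h + g] nonnegative. *)
Lemma ex_finite_lim_Rsum_dominated (g h : A -> R) E :
  (forall x, Rabs (g x) <= h x) -> (forall N, Rsum (map h (L N)) <= E) ->
  ex_finite_lim_seq (fun N => Rsum (map g (L N))).
Proof.
  intros Hgh HE.
  assert (Hg : forall x, - h x <= g x <= h x)
    by (intros x; specialize (Hgh x); unfold Rabs in Hgh; destruct Rcase_abs; lra).
  destruct (ex_finite_lim_Rsum_nonneg h E) as [lh Hh]; auto.
  { intros x; specialize (Hg x); lra. }
  destruct (ex_finite_lim_Rsum_nonneg (fun x => h x + g x) (2 * E)) as [lhg Hhg].
  { intros x; specialize (Hg x); lra. }
  { intros N. rewrite Rsum_plus.
    assert (Rsum (map g (L N)) <= Rsum (map h (L N)))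
      by (apply Rsum_le; intros x _; specialize (Hg x); lra).
    specialize (HE N); lra. }
  exists (lhg - lh).
  apply (is_lim_seq_ext (fun N => Rsum (map (fun x => h x + g x) (L N)) - Rsum (map h (L N)))).
  - intros N; rewrite Rsum_plus; ring.
  - now apply is_lim_seq_minus'.
Qed.

Lemma Csum_nested_cvg (t : A -> C) E :
  (forall N, Rsum (map (fun x => Cmod (t x)) (L N)) <= E) ->
  exists l : C, filterlim (fun N => Csum (map t (L N))) eventually (locally l) /\ Cmod l <= E.
Proof.
  intros HE.
  destruct (ex_finite_lim_Rsum_dominated (fun x => Re (t x)) _ E (fun x => re_le_Cmod (t x)) HE)
    as [a Ha].
  destruct (ex_finite_lim_Rsum_dominated (fun x => Im (t x)) _ E (fun x => im_le_Cmod (t x)) HE)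
    as [b Hb].
  assert (Hl : filterlim (fun N => Csum (map t (L N))) eventually (locally ((a, b) : C))).
  { apply is_lim_seq_C.
    - now apply (is_lim_seq_ext _ _ _ (fun N => eq_sym (Re_Csum t (L N)))).
    - now apply (is_lim_seq_ext _ _ _ (fun N => eq_sym (Im_Csum t (L N)))). }
  exists (a, b); split; [exact Hl|].
  assert (Hmod : is_lim_seq (fun N => Cmod (Csum (map t (L N)))) (Cmod (a, b))).
  { eapply filterlim_comp; [exact Hl | apply filterlim_Cmod]. }
  apply (is_lim_seq_le _ _ _ _ (fun N => Rle_trans _ _ _ (Cmod_Csum t (L N)) (HE N))
           Hmod (is_lim_seq_const E)).
Qed.

End NestedSums.

Lemma Z3eqb_false k j : Z3eqb k j = false <-> k <> j.
Proof.
  destruct k as [[a b] c], j as [[a' b'] c']; unfold Z3eqb, zx, zy, zz; simpl.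
  rewrite !Bool.andb_false_iff, !Z.eqb_neq.
  split; [intros H E; inversion E; lia|].
  intros H; destruct (Z.eq_dec a a'), (Z.eq_dec b b'), (Z.eq_dec c c'); subst; tauto.
Qed.

Lemma Z3sub_neq0 k j : j <> k -> Z3sub k j <> Z3zero.
Proof.
  intros H E; apply H.
  destruct k as [[a b] c], j as [[x y] z]; unfold Z3sub, z3, zx, zy, zz, Z3zero in E.
  cbn [fst snd] in E; injection E; intros; f_equal; [f_equal|]; lia.
Qed.

Lemma in_zrange N z : In z (zrange N) <-> (- Z.of_nat N <= z <= Z.of_nat N)%Z.
Proof.
  unfold zrange; rewrite in_map_iff; split.
  - intros [n [<- Hn]]; apply in_seq in Hn; lia.
  - intros H; exists (Z.to_nat (z + Z.of_nat N)); split; [lia | apply in_seq; lia].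
Qed.

Lemma NoDup_zrange N : NoDup (zrange N).
Proof.
  apply NoDup_map_NoDup_ForallPairs; [intros x y _ _ H; lia | apply seq_NoDup].
Qed.

Lemma NoDup_list_prod {A B} (l1 : list A) (l2 : list B) :
  NoDup l1 -> NoDup l2 -> NoDup (list_prod l1 l2).
Proof.
  intros H1 H2; induction H1 as [|a l1 Ha H1 IH]; simpl; [constructor|].
  apply NoDup_app; auto.
  - apply NoDup_map_NoDup_ForallPairs; auto. intros x y _ _ H; now inversion H.
  - intros [x y] Hx Hy; apply in_map_iff in Hx as [z [Hz _]]; inversion Hz; subst.
    apply in_prod_iff in Hy; tauto.
Qed.

Lemma NoDup_box N : NoDup (box N).
Proof. repeat apply NoDup_list_prod; apply NoDup_zrange. Qed.

Lemma in_box N j : In j (box N) <->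
  (Z.abs (zx j) <= Z.of_nat N /\ Z.abs (zy j) <= Z.of_nat N /\ Z.abs (zz j) <= Z.of_nat N)%Z.
Proof.
  destruct j as [[a b] c]; unfold box, zx, zy, zz; cbn [fst snd].
  split.
  - intros Hj; apply in_prod_iff in Hj as [Hab Hc]; apply in_prod_iff in Hab as [Ha Hb].
    rewrite in_zrange in *; lia.
  - intros Hj; apply in_prod; [apply in_prod|]; apply in_zrange; lia.
Qed.

Lemma incl_box N M : (N <= M)%nat -> incl (box N) (box M).
Proof. intros H j; rewrite !in_box; lia. Qed.

Lemma Rabs_dot3_le x1 x2 x3 y1 y2 y3 :
  Rabs (x1 * y1 + x2 * y2 + x3 * y3) <=
  sqrt (x1 ^ 2 + x2 ^ 2 + x3 ^ 2) * sqrt (y1 ^ 2 + y2 ^ 2 + y3 ^ 2).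
Proof.
  rewrite <- sqrt_mult by nra.
  rewrite <- sqrt_Rsqr_abs; apply sqrt_le_1_alt; unfold Rsqr.
  assert (H : (x1 ^ 2 + x2 ^ 2 + x3 ^ 2) * (y1 ^ 2 + y2 ^ 2 + y3 ^ 2)
              - (x1 * y1 + x2 * y2 + x3 * y3) * (x1 * y1 + x2 * y2 + x3 * y3)
              = (x1 * y2 - x2 * y1) ^ 2 + (x1 * y3 - x3 * y1) ^ 2 + (x2 * y3 - x3 * y2) ^ 2)
    by ring.
  pose proof (pow2_ge_0 (x1 * y2 - x2 * y1)); pose proof (pow2_ge_0 (x1 * y3 - x3 * y1)).
  pose proof (pow2_ge_0 (x2 * y3 - x3 * y2)).
  lra.
Qed.

Lemma knorm_nonneg k : 0 <= knorm k.
Proof. apply sqrt_pos. Qed.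

Lemma knorm_ge_1 k : k <> Z3zero -> 1 <= knorm k.
Proof.
  intros H; unfold knorm; rewrite <- sqrt_1; apply sqrt_le_1_alt.
  destruct k as [[a b] c]; unfold zx, zy, zz; simpl.
  assert (Hsq : forall z, z <> 0%Z -> 1 <= IZR z * (IZR z * 1))
    by (intros z Hz; rewrite Rmult_1_r, <- mult_IZR; apply IZR_le; nia).
  assert (a <> 0 \/ b <> 0 \/ c <> 0)%Z as [Ha | [Hb | Hc]]
    by (destruct (Z.eq_dec a 0), (Z.eq_dec b 0), (Z.eq_dec c 0); subst; auto).
  - specialize (Hsq a Ha); nra.
  - specialize (Hsq b Hb); nra.
  - specialize (Hsq c Hc); nra.
Qed.

Lemma knorm_sub_triangle k j : knorm k <= knorm j + knorm (Z3sub k j).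
Proof.
  destruct k as [[k1 k2] k3], j as [[x1 x2] x3].
  unfold knorm, Z3sub, z3, zx, zy, zz; cbn [fst snd]; rewrite !minus_IZR.
  set (y1 := IZR k1 - IZR x1); set (y2 := IZR k2 - IZR x2); set (y3 := IZR k3 - IZR x3).
  replace (IZR k1) with (IZR x1 + y1) by (unfold y1; ring).
  replace (IZR k2) with (IZR x2 + y2) by (unfold y2; ring).
  replace (IZR k3) with (IZR x3 + y3) by (unfold y3; ring).
  pose proof (Rabs_dot3_le (IZR x1) (IZR x2) (IZR x3) y1 y2 y3) as Hcs.
  set (a := sqrt (IZR x1 ^ 2 + IZR x2 ^ 2 + IZR x3 ^ 2)) in *.
  set (b := sqrt (y1 ^ 2 + y2 ^ 2 + y3 ^ 2)) in *.
  assert (Ha : a * a = IZR x1 ^ 2 + IZR x2 ^ 2 + IZR x3 ^ 2) by (apply sqrt_sqrt; nra).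
  assert (Hb : b * b = y1 ^ 2 + y2 ^ 2 + y3 ^ 2) by (apply sqrt_sqrt; nra).
  pose proof (sqrt_pos (IZR x1 ^ 2 + IZR x2 ^ 2 + IZR x3 ^ 2)).
  pose proof (sqrt_pos (y1 ^ 2 + y2 ^ 2 + y3 ^ 2)).
  rewrite <- (sqrt_square (a + b)) by (unfold a, b; lra).
  apply sqrt_le_1_alt; pose proof (Rle_abs (IZR x1 * y1 + IZR x2 * y2 + IZR x3 * y3)); nra.
Qed.

Lemma Rabs_vdotZ_le v j : vdot v v = 1 -> Rabs (vdotZ v j) <= knorm j.
Proof.
  intros Hv; destruct v as [[v1 v2] v3]; unfold vdot, vdotZ, knorm, vx, vy, vz in *.
  cbn [fst snd] in *.
  eapply Rle_trans; [apply Rabs_dot3_le|].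
  replace (v1 ^ 2 + v2 ^ 2 + v3 ^ 2) with 1 by lra.
  rewrite sqrt_1; lra.
Qed.

Lemma khnorm_sqr m : on_z_axis m = false ->
  0 < IZR (zx m) ^ 2 + IZR (zy m) ^ 2 /\ khnorm m * khnorm m = IZR (zx m) ^ 2 + IZR (zy m) ^ 2.
Proof.
  unfold on_z_axis, khnorm; intros E.
  assert (Hpos : 0 < IZR (zx m) ^ 2 + IZR (zy m) ^ 2).
  { apply Bool.andb_false_iff in E as [E|E]; apply Z.eqb_neq, not_0_IZR in E;
      pose proof (pow2_ge_0 (IZR (zx m))); pose proof (pow2_ge_0 (IZR (zy m))); simpl; nra. }
  split; [exact Hpos | apply sqrt_sqrt; lra].
Qed.

Lemma vdot_e_vec_self ez fz (Hb : valid_axis_basis ez fz) m :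
  vdot (e_vec ez m) (e_vec ez m) = 1.
Proof.
  unfold e_vec; destruct (on_z_axis m) eqn:E; [apply (Hb (zz m))|].
  destruct (khnorm_sqr m E) as [Hpos Hh].
  assert (0 < khnorm m) by (apply sqrt_lt_R0; exact Hpos).
  unfold vdot, vx, vy, vz; cbn [fst snd].
  apply (Rmult_eq_reg_r (khnorm m * khnorm m)); [|nra].
  field_simplify; [nra | lra].
Qed.

Lemma vdot_f_vec_self ez fz (Hb : valid_axis_basis ez fz) m :
  vdot (f_vec fz m) (f_vec fz m) = 1.
Proof.
  unfold f_vec; destruct (on_z_axis m) eqn:E; [apply (Hb (zz m))|].
  destruct (khnorm_sqr m E) as [Hpos Hh].
  assert (Hk : knorm m * knorm m = IZR (zx m) ^ 2 + IZR (zy m) ^ 2 + IZR (zz m) ^ 2)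
    by (apply sqrt_sqrt; pose proof (pow2_ge_0 (IZR (zz m))); lra).
  assert (0 < khnorm m) by (apply sqrt_lt_R0; exact Hpos).
  assert (0 < knorm m) by (apply sqrt_lt_R0; pose proof (pow2_ge_0 (IZR (zz m))); lra).
  unfold vdot, vx, vy, vz; cbn [fst snd].
  apply (Rmult_eq_reg_r ((knorm m * khnorm m) ^ 2)); [|nra].
  field_simplify; [|lra].
  replace (khnorm m ^ 4) with ((khnorm m * khnorm m) * (khnorm m * khnorm m)) by ring.
  replace (knorm m ^ 2) with (knorm m * knorm m) by ring.
  replace (khnorm m ^ 2) with (khnorm m * khnorm m) by ring.
  rewrite Hh, Hk; ring.
Qed.

Lemma Rpower_pos x y : 0 < Rpower x y.
Proof. apply exp_pos. Qed.

Lemma Rpower_le_base_nonpos x y b : 0 < x -> x <= y -> b <= 0 -> Rpower y b <= Rpower x b.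
Proof.
  intros Hx Hxy Hb; replace b with (- (- b)) by ring.
  rewrite (Rpower_Ropp x), (Rpower_Ropp y).
  apply Rinv_le_contravar; [apply Rpower_pos | apply Rle_Rpower_l; lra].
Qed.

(* One of [a], [b] is at least [s/2]; the decay of [a^p] absorbs whatever
   the factor [b^beta] fails to provide. *)
Lemma Rpower_split_le a b s beta p : 1 <= a -> 1 <= b -> 0 < s -> s <= a + b ->
  beta < 0 -> p <= beta -> p <= -6 ->
  Rpower b beta * Rpower a p <= Rpower (s / 2) beta * (Rpower a (-6) + Rpower b (-6)).
Proof.
  intros Ha Hb Hs Hab Hbeta Hpb Hp6.
  pose proof (Rpower_pos a (-6)); pose proof (Rpower_pos b (-6)).
  pose proof (Rpower_pos (s / 2) beta); pose proof (Rpower_pos b beta); pose proof (Rpower_pos a p).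
  assert (Hap6 : Rpower a p <= Rpower a (-6)) by (apply Rle_Rpower; lra).
  destruct (Rle_dec b a) as [Hba|Hab'].
  - assert (Has : Rpower a beta <= Rpower (s / 2) beta) by (apply Rpower_le_base_nonpos; lra).
    assert (Hmain : Rpower b beta * Rpower a p <= Rpower b (-6) * Rpower a beta).
    { destruct (Rle_dec (-6) beta).
      - replace (Rpower b beta) with (Rpower b (-6) * Rpower b (beta + 6))
          by (rewrite <- Rpower_plus; f_equal; ring).
        assert (Rpower b (beta + 6) <= Rpower a (beta + 6)) by (apply Rle_Rpower_l; lra).
        assert (Rpower a (beta + 6) * Rpower a p <= Rpower a beta)
          by (rewrite <- Rpower_plus; apply Rle_Rpower; lra).
        pose proof (Rpower_pos b (beta + 6)).
        rewrite Rmult_assoc; apply Rmult_le_compat_l; nra.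
      - apply Rmult_le_compat; try lra; apply Rle_Rpower; lra. }
    nra.
  - assert (Hbs : Rpower b beta <= Rpower (s / 2) beta) by (apply Rpower_le_base_nonpos; lra).
    assert (Rpower b beta * Rpower a p <= Rpower (s / 2) beta * Rpower a (-6))
      by (apply Rmult_le_compat; lra).
    nra.
Qed.

(* [Phi] is a bounded discrete primitive of a majorant of [weight1], so sums of [weight1]
   over intervals telescope. *)
Definition weight1 (y : Z) : R := / (1 + IZR y ^ 2).
Definition Phi (y : Z) : R := if (0 <=? y)%Z then - 3 / (IZR y + 1) else 3 / (1 - IZR y) - 6.

Lemma weight1_pos y : 0 < weight1 y.
Proof. apply Rinv_0_lt_compat; pose proof (pow2_ge_0 (IZR y)); lra. Qed.

Lemma weight1_opp y : weight1 (- y) = weight1 y.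
Proof. unfold weight1; rewrite opp_IZR; f_equal; ring. Qed.

Lemma Phi_bound y : -6 <= Phi y <= 0.
Proof.
  unfold Phi; destruct (0 <=? y)%Z eqn:E.
  - apply Z.leb_le, IZR_le in E.
    assert (0 < / (IZR y + 1) <= 1)
      by (split; [apply Rinv_0_lt_compat | rewrite <- Rinv_1; apply Rinv_le_contravar]; lra).
    unfold Rdiv; nra.
  - apply Z.leb_gt, IZR_lt in E.
    assert (0 < / (1 - IZR y) <= 1)
      by (split; [apply Rinv_0_lt_compat | rewrite <- Rinv_1; apply Rinv_le_contravar]; lra).
    unfold Rdiv; nra.
Qed.

Lemma Rinv_le_3_div A B : 0 < B -> B <= 3 * A -> / A <= 3 / B.
Proof.
  intros HB H; replace (3 / B) with (/ (B / 3)) by (field; lra).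
  apply Rinv_le_contravar; lra.
Qed.

Lemma weight1_le_Phi_step y : weight1 y <= Phi (y + 1) - Phi y.
Proof.
  unfold weight1, Phi.
  destruct (Z_lt_le_dec y 0) as [Hy|Hy].
  - destruct (Z.eq_dec y (-1)) as [->|Hn].
    + simpl; replace (IZR (-1)) with (-1) by reflexivity.
      replace (-3 / (0 + 1) - (3 / (1 - -1) - 6)) with (3 / 2) by field.
      apply Rinv_le_3_div; lra.
    + replace (0 <=? y + 1)%Z with false by (symmetry; apply Z.leb_gt; lia).
      replace (0 <=? y)%Z with false by (symmetry; apply Z.leb_gt; lia).
      assert (Hy2 : IZR y <= -2) by (apply IZR_le; lia).
      rewrite plus_IZR.
      replace (3 / (1 - (IZR y + 1)) - 6 - (3 / (1 - IZR y) - 6))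
        with (3 / (- IZR y * (1 - IZR y))) by (field; lra).
      apply Rinv_le_3_div; nra.
  - replace (0 <=? y + 1)%Z with true by (symmetry; apply Z.leb_le; lia).
    replace (0 <=? y)%Z with true by (symmetry; apply Z.leb_le; lia).
    assert (Hy0 : 0 <= IZR y) by (apply IZR_le; lia).
    rewrite plus_IZR.
    replace (-3 / (IZR y + 1 + 1) - -3 / (IZR y + 1))
      with (3 / ((IZR y + 1) * (IZR y + 2))) by (field; lra).
    destruct (Z.eq_dec y 0) as [->|Hn]; [simpl; apply Rinv_le_3_div; lra|].
    assert (1 <= IZR y) by (apply IZR_le; lia).
    apply Rinv_le_3_div; nra.
Qed.

Lemma sum_weight1_seq_le a s n :
  Rsum (map (fun i => weight1 (a + Z.of_nat i)) (seq s n)) <=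
  Phi (a + Z.of_nat s + Z.of_nat n) - Phi (a + Z.of_nat s).
Proof.
  revert s; induction n as [|n IH]; intros s; cbn [seq map Rsum fold_right].
  - rewrite Z.add_0_r; lra.
  - specialize (IH (S s)); pose proof (weight1_le_Phi_step (a + Z.of_nat s)).
    replace (a + Z.of_nat (S s) + Z.of_nat n)%Z with (a + Z.of_nat s + Z.of_nat (S n))%Z in IH
      by lia.
    replace (a + Z.of_nat (S s))%Z with (a + Z.of_nat s + 1)%Z in IH by lia.
    unfold Rsum in *; lra.
Qed.

Lemma sum_weight1_shift_le c N : Rsum (map (fun x => weight1 (c - x)) (zrange N)) <= 6.
Proof.
  unfold zrange; rewrite map_map.
  rewrite (map_ext _ (fun i => weight1 (- (c + Z.of_nat N) + Z.of_nat i)))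
    by (intros i; rewrite <- weight1_opp; f_equal; lia).
  eapply Rle_trans; [apply sum_weight1_seq_le|].
  pose proof (Phi_bound (- (c + Z.of_nat N) + Z.of_nat 0 + Z.of_nat (2 * N + 1))).
  pose proof (Phi_bound (- (c + Z.of_nat N) + Z.of_nat 0)).
  lra.
Qed.

Definition weight3 (j : Z3) : R := weight1 (zx j) * weight1 (zy j) * weight1 (zz j).

Lemma weight3_pos j : 0 < weight3 j.
Proof.
  unfold weight3; pose proof (weight1_pos (zx j)); pose proof (weight1_pos (zy j)).
  pose proof (weight1_pos (zz j)); apply Rmult_lt_0_compat; [apply Rmult_lt_0_compat|]; auto.
Qed.

Lemma sum_box_prod (F1 F2 F3 : Z -> R) N :
  Rsum (map (fun j => F1 (zx j) * F2 (zy j) * F3 (zz j)) (box N)) =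
  Rsum (map F1 (zrange N)) * Rsum (map F2 (zrange N)) * Rsum (map F3 (zrange N)).
Proof.
  unfold box.
  rewrite (map_ext _ (fun p => (fun q => F1 (fst q) * F2 (snd q)) (fst p) * F3 (snd p)))
    by (intros [[x y] z]; reflexivity).
  now rewrite (Rsum_prod (fun q => F1 (fst q) * F2 (snd q)) F3), (Rsum_prod F1 F2).
Qed.

Lemma sum_weight3_shift_box_le k N :
  Rsum (map (fun j => weight3 (Z3sub k j)) (box N)) <= 216.
Proof.
  unfold weight3, Z3sub, z3, zx, zy, zz; cbn [fst snd].
  rewrite (sum_box_prod (fun x => weight1 (fst (fst k) - x)) (fun x => weight1 (snd (fst k) - x))
             (fun x => weight1 (snd k - x))).
  assert (H : forall c, 0 <= Rsum (map (fun x => weight1 (c - x)) (zrange N)) <= 6)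
    by (intros c; split; [apply Rsum_nonneg; intros; left; apply weight1_pos
                         | apply sum_weight1_shift_le]).
  pose proof (H (fst (fst k))); pose proof (H (snd (fst k))); pose proof (H (snd k)).
  assert (Rsum (map (fun x => weight1 (fst (fst k) - x)) (zrange N)) *
          Rsum (map (fun x => weight1 (snd (fst k) - x)) (zrange N)) <= 36) by nra.
  nra.
Qed.

Lemma sum_weight3_box_le N : Rsum (map weight3 (box N)) <= 216.
Proof.
  rewrite (map_ext weight3 (fun j => weight3 (Z3sub Z3zero j))); [apply sum_weight3_shift_box_le|].
  intros j; unfold weight3, Z3sub, z3, zx, zy, zz, Z3zero; cbn [fst snd].
  rewrite !Z.sub_0_l, !weight1_opp; reflexivity.
Qed.

Lemma Rpower_knorm_le_weight3 j : j <> Z3zero -> Rpower (knorm j) (-6) <= 8 * weight3 j.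
Proof.
  intros Hj; pose proof (knorm_ge_1 j Hj) as Ha.
  assert (Hs : knorm j * knorm j = IZR (zx j) ^ 2 + IZR (zy j) ^ 2 + IZR (zz j) ^ 2)
    by (apply sqrt_sqrt; nra).
  replace (-6) with (- INR 6) by (simpl; ring).
  rewrite Rpower_Ropp, Rpower_pow by lra.
  unfold weight3, weight1; rewrite <- !Rinv_mult.
  set (a := knorm j) in *; set (x := IZR (zx j)) in *; set (y := IZR (zy j)) in *;
    set (z := IZR (zz j)) in *.
  pose proof (pow2_ge_0 x); pose proof (pow2_ge_0 y); pose proof (pow2_ge_0 z).
  replace (8 * / ((1 + x ^ 2) * (1 + y ^ 2) * (1 + z ^ 2)))
    with (/ ((1 + x ^ 2) * (1 + y ^ 2) * (1 + z ^ 2) / 8)) by (field; repeat split; nra).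
  assert (1 + x ^ 2 <= 2 * a ^ 2) by nra.
  assert (1 + y ^ 2 <= 2 * a ^ 2) by nra.
  assert (1 + z ^ 2 <= 2 * a ^ 2) by nra.
  assert (0 < (1 + x ^ 2) * (1 + y ^ 2)) by nra.
  assert ((1 + x ^ 2) * (1 + y ^ 2) <= (2 * a ^ 2) * (2 * a ^ 2))
    by (apply Rmult_le_compat; nra).
  assert ((1 + x ^ 2) * (1 + y ^ 2) * (1 + z ^ 2) <= (2 * a ^ 2) * (2 * a ^ 2) * (2 * a ^ 2))
    by (apply Rmult_le_compat; nra).
  apply Rinv_le_contravar; nra.
Qed.

Lemma in_box_of_knorm_lt j r : knorm j < r -> In j (box (Z.to_nat (up r))).
Proof.
  intros Hj; destruct (archimed r) as [Hup _].
  assert (Hcoord : forall v c, vdot v v = 1 -> vdotZ v j = IZR c ->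
            (Z.abs c <= Z.of_nat (Z.to_nat (up r)))%Z).
  { intros v c Hv Hc; pose proof (Rabs_vdotZ_le v j Hv) as H; rewrite Hc, <- abs_IZR in H.
    assert (IZR (Z.abs c) < IZR (up r)) as Hlt%lt_IZR by lra; lia. }
  apply in_box; repeat split;
    [apply (Hcoord (1, 0, 0)) | apply (Hcoord (0, 1, 0)) | apply (Hcoord (0, 0, 1))];
    unfold vdot, vdotZ, vx, vy, vz; simpl; ring.
Qed.

Lemma gamma_knorm_le (gamma : Z3 -> C) c_g kappa alpha : 0 <= c_g ->
  (forall k, k <> Z3zero -> kappa <= knorm k -> Cmod (gamma k) <= c_g * Rpower (knorm k) alpha) ->
  exists D, 0 <= D /\ forall j, j <> Z3zero ->
    Cmod (gamma j) * knorm j <= D * Rpower (knorm j) (alpha + 1).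
Proof.
  intros Hcg Hdecay; set (p := alpha + 1).
  set (g := fun j => Cmod (gamma j) * knorm j * Rpower (knorm j) (- p)).
  assert (Hg : forall j, 0 <= g j).
  { intros j; pose proof (Cmod_ge_0 (gamma j)); pose proof (knorm_nonneg j).
    pose proof (Rpower_pos (knorm j) (- p)); unfold g; apply Rmult_le_pos; nra. }
  set (D0 := Rsum (map g (box (Z.to_nat (up kappa))))).
  assert (HD0 : 0 <= D0) by (apply Rsum_nonneg; exact Hg).
  exists (c_g + D0); split; [lra|]; intros j Hj.
  pose proof (knorm_ge_1 j Hj); pose proof (Rpower_pos (knorm j) p).
  destruct (Rle_dec kappa (knorm j)) as [Hfar|Hnear].
  - assert (Hp : Rpower (knorm j) p = Rpower (knorm j) alpha * knorm j)
      by (unfold p; rewrite Rpower_plus, Rpower_1; lra).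
    pose proof (Hdecay j Hj Hfar).
    assert (Cmod (gamma j) * knorm j <= c_g * Rpower (knorm j) alpha * knorm j)
      by (apply Rmult_le_compat_r; lra).
    nra.
  - assert (Hj0 : g j <= D0)
      by (apply Rsum_elem_le; [exact Hg | apply in_box_of_knorm_lt; lra]).
    assert (Hgj : Cmod (gamma j) * knorm j = g j * Rpower (knorm j) p).
    { unfold g; rewrite Rmult_assoc, <- Rpower_plus, Rplus_opp_l, Rpower_O by lra; ring. }
    rewrite Hgj; pose proof (Hg j); nra.
Qed.

Lemma Rpower_half_le_Kbeta kappa beta s : 1 <= kappa -> beta < 0 -> 1 <= s ->
  Rpower (s / 2) beta <= Rpower 2 (- beta) * Kbeta kappa beta s.
Proof.
  intros Hk Hb Hs; unfold Kbeta.
  assert (H1 : 1 <= Rpower 2 (- beta)) by (rewrite <- (Rpower_O 2) by lra; apply Rle_Rpower; lra).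
  apply Rmin_case.
  - replace (Rpower 2 (- beta)) with (Rpower (/ 2) beta)
      by (rewrite Rpower_Ropp; unfold Rpower; rewrite ln_Rinv, <- exp_Ropp by lra; f_equal; ring).
    rewrite Rmult_1_r; apply Rpower_le_base_nonpos; lra.
  - replace (s / 2) with (s / (2 * kappa) * kappa) by (field; lra).
    rewrite <- Rpower_mult_distr by (try apply Rdiv_lt_0_compat; lra).
    assert (Rpower kappa beta <= 1) by (rewrite <- (Rpower_O kappa) by lra; apply Rle_Rpower; lra).
    pose proof (Rpower_pos (s / (2 * kappa)) beta); nra.
Qed.

Lemma Cmod_theta_term_le ez fz (Hb : valid_axis_basis ez fz) gamma V W beta U Xi k j :
  0 <= U -> Cmod (V (Z3sub k j)) <= Xi -> Cmod (W (Z3sub k j)) <= Xi ->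
  Cmod (theta_term ez fz gamma V W beta U k j) <=
    2 * U * Xi * (Rpower (knorm (Z3sub k j)) beta * (Cmod (gamma j) * knorm j)).
Proof.
  intros HU HV HW; unfold theta_term; set (m := Z3sub k j) in *.
  rewrite !Cmod_mult, !Cmod_R, (Rabs_pos_eq U) by lra.
  rewrite (Rabs_pos_eq (Rpower _ _)) by (left; apply Rpower_pos).
  assert (Hdot : forall v w, vdot v v = 1 -> Cmod w <= Xi ->
            Cmod (RtoC (vdotZ v j) * w) <= knorm j * Xi).
  { intros v w Hv Hw; rewrite Cmod_mult, Cmod_R.
    apply Rmult_le_compat; [apply Rabs_pos | apply Cmod_ge_0 | apply Rabs_vdotZ_le | ]; auto. }
  pose proof (Hdot _ _ (vdot_e_vec_self ez fz Hb m) HV).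
  pose proof (Hdot _ _ (vdot_f_vec_self ez fz Hb m) HW).
  pose proof (Cmod_triangle (RtoC (vdotZ (e_vec ez m) j) * V m) (RtoC (vdotZ (f_vec fz m) j) * W m)).
  pose proof (Rpower_pos (knorm m) beta); pose proof (Cmod_ge_0 (gamma j)).
  assert (0 <= Rpower (knorm m) beta * Cmod (gamma j) * U) by (apply Rmult_le_pos; nra).
  nra.
Qed.

Definition theta_index (k : Z3) (N : nat) : list Z3 :=
  filter (fun j => negb (Z3eqb j Z3zero) && negb (Z3eqb j k))%bool (box N).

Lemma in_theta_index k N j : In j (theta_index k N) -> j <> Z3zero /\ j <> k.
Proof.
  unfold theta_index; rewrite filter_In; intros [_ Hj].
  apply andb_prop in Hj as [H0 Hk]; apply Bool.negb_true_iff, Z3eqb_false in H0, Hk.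
  auto.
Qed.

Lemma NoDup_theta_index k N : NoDup (theta_index k N).
Proof. apply NoDup_filter, NoDup_box. Qed.

Lemma incl_theta_index_S k N : incl (theta_index k N) (theta_index k (S N)).
Proof.
  intros j; unfold theta_index; rewrite !filter_In; intros [Hj HP].
  split; [apply (incl_box N); auto | exact HP].
Qed.

Section ThetaSeries.

Variables (ez fz : Z -> vec) (gamma V W : Z3 -> C) (beta U Xi D p : R).
Hypothesis Hbasis : valid_axis_basis ez fz.
Hypotheses (HU : 0 <= U) (HD : 0 <= D) (Hbeta : beta < 0) (Hpb : p <= beta) (Hp6 : p <= -6).
Hypothesis HVW : forall m, m <> Z3zero -> Cmod (V m) <= Xi /\ Cmod (W m) <= Xi.
Hypothesis Hgamma : forall j, j <> Z3zero -> Cmod (gamma j) * knorm j <= D * Rpower (knorm j) p.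

Let c (k : Z3) : R := 16 * U * Xi * D * Rpower (knorm k / 2) beta.

Lemma Cmod_theta_term_le_weight3 k j : k <> Z3zero -> j <> Z3zero -> j <> k ->
  Cmod (theta_term ez fz gamma V W beta U k j) <= c k * (weight3 j + weight3 (Z3sub k j)).
Proof.
  intros Hk Hj Hjk; set (m := Z3sub k j).
  assert (Hm : m <> Z3zero) by (apply Z3sub_neq0; exact Hjk).
  destruct (HVW m Hm) as [HV HW].
  pose proof (Cmod_theta_term_le ez fz Hbasis gamma V W beta U Xi k j HU HV HW) as Ht.
  pose proof (Rpower_split_le (knorm j) (knorm m) (knorm k) beta p (knorm_ge_1 j Hj)
                (knorm_ge_1 m Hm) ltac:(pose proof (knorm_ge_1 k Hk); lra)
                (knorm_sub_triangle k j) Hbeta Hpb Hp6) as Hsplit.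
  pose proof (Rpower_knorm_le_weight3 j Hj); pose proof (Rpower_knorm_le_weight3 m Hm).
  pose proof (Hgamma j Hj); pose proof (Rpower_pos (knorm m) beta).
  pose proof (Rpower_pos (knorm k / 2) beta); pose proof (Cmod_ge_0 (V m)).
  assert (HUXi : 0 <= 2 * U * Xi) by nra.
  assert (Hb : Rpower (knorm m) beta * (Cmod (gamma j) * knorm j)
          <= D * (Rpower (knorm k / 2) beta * (8 * weight3 j + 8 * weight3 m))).
  { apply Rle_trans with (D * (Rpower (knorm m) beta * Rpower (knorm j) p)); [nra|].
    apply Rmult_le_compat_l; [exact HD|]; nra. }
  apply (Rmult_le_compat_l _ _ _ HUXi) in Hb.
  eapply Rle_trans; [exact Ht|]; eapply Rle_trans; [exact Hb|].
  unfold c; right; ring.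
Qed.

Lemma sum_Cmod_theta_term_le k N : k <> Z3zero ->
  Rsum (map (fun j => Cmod (theta_term ez fz gamma V W beta U k j)) (theta_index k N))
  <= 432 * c k.
Proof.
  intros Hk.
  assert (Hc : 0 <= c k).
  { destruct (HVW k Hk) as [HV _]; pose proof (Cmod_ge_0 (V k)).
    pose proof (Rpower_pos (knorm k / 2) beta); unfold c; repeat apply Rmult_le_pos; lra. }
  set (w := fun j => c k * (weight3 j + weight3 (Z3sub k j))).
  assert (Hw : forall j, 0 <= w j).
  { intros j; pose proof (weight3_pos j); pose proof (weight3_pos (Z3sub k j)); unfold w; nra. }
  apply Rle_trans with (Rsum (map w (theta_index k N))).
  { apply Rsum_le; intros j Hj; apply in_theta_index in Hj as [Hj0 Hjk].
    apply Cmod_theta_term_le_weight3; assumption. }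
  apply Rle_trans with (Rsum (map w (box N))); [apply Rsum_filter_le, Hw|].
  unfold w; rewrite Rsum_scal, Rsum_plus.
  pose proof (sum_weight3_box_le N); pose proof (sum_weight3_shift_box_le k N).
  nra.
Qed.

Lemma theta_partial_cvg k : k <> Z3zero ->
  exists theta : C,
    filterlim (theta_partial ez fz gamma V W beta U k) eventually (locally theta) /\
    Cmod theta <= / knorm k ^ 2 * (432 * c k).
Proof.
  intros Hk.
  destruct (Csum_nested_cvg (theta_index k) (NoDup_theta_index k) (incl_theta_index_S k)
              (theta_term ez fz gamma V W beta U k) _ (fun N => sum_Cmod_theta_term_le k N Hk))
    as [l [Hl Hmod]].
  set (a := Cmult Ci (RtoC (/ knorm k ^ 2))).
  exists (Cmult a l); split.
  - apply (filterlim_comp _ _ _ _ (Cmult a) _ _ _ Hl).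
    exact (filterlim_scal_r (V := C_NormedModule) a l).
  - assert (Hk2 : 0 < / knorm k ^ 2)
      by (apply Rinv_0_lt_compat, pow_lt; pose proof (knorm_ge_1 k Hk); lra).
    unfold a; rewrite !Cmod_mult, Cmod_Ci, Cmod_R, Rabs_pos_eq by lra.
    rewrite Rmult_1_l; apply Rmult_le_compat_l; lra.
Qed.

End ThetaSeries.

Theorem mainTheorem5
  (ez fz : Z -> vec) (Hbasis : valid_axis_basis ez fz)
  (gamma : Z3 -> C) (c_g kappa_g alpha beta : R)
  (Hgsym : forall k, k <> Z3zero -> gamma (Z3neg k) = Cconj (gamma k))
  (Hcg : 0 <= c_g) (Hkap1 : 1 < kappa_g) (Halpha0 : alpha < 0)
  (Hgdecay : forall k, k <> Z3zero -> kappa_g <= knorm k ->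
       Cmod (gamma k) <= c_g * Rpower (knorm k) alpha)
  (Hbeta : beta < -2) (Hkap : 16 <= kappa_g)
  (Halpha : alpha <= 2 * Rmin beta (-3) - 1) :
  exists Cst : R, 0 <= Cst /\
    forall (U Xi : R) (V W : Z3 -> C),
      0 <= U ->
      (forall k, k <> Z3zero -> Cmod (V k) <= Xi /\ Cmod (W k) <= Xi) ->
      (forall k, k <> Z3zero ->
         V (Z3neg k) = Cconj (V k) /\ W (Z3neg k) = Cconj (W k)) ->
      forall k : Z3, k <> Z3zero ->
        exists theta_k : C,
          filterlim (theta_partial ez fz gamma V W beta U k) eventually
                    (locally theta_k) /\
          Cmod theta_k <=
            Cst * U * Xi * / (knorm k ^ 2) * Kbeta kappa_g beta (knorm k).
Proof.
  destruct (gamma_knorm_le gamma c_g kappa_g alpha Hcg Hgdecay) as [D [HD Hgamma]].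
  assert (Hp : alpha + 1 <= beta /\ alpha + 1 <= -6)
    by (pose proof (Rmin_l beta (-3)); pose proof (Rmin_r beta (-3)); lra).
  pose proof (Rpower_pos 2 (- beta)).
  exists (16 * 432 * D * Rpower 2 (- beta)); split; [nra|].
  intros U Xi V W HU HVW _ k Hk.
  destruct (theta_partial_cvg ez fz gamma V W beta U Xi D (alpha + 1) Hbasis HU HD
              ltac:(lra) (proj1 Hp) (proj2 Hp) HVW Hgamma k Hk) as [theta [Hlim Hmod]].
  exists theta; split; [exact Hlim|].
  pose proof (Rpower_half_le_Kbeta kappa_g beta (knorm k) ltac:(lra) ltac:(lra) (knorm_ge_1 k Hk))
    as HK.
  set (M := 16 * 432 * U * Xi * D * / knorm k ^ 2).
  assert (HM : 0 <= M).
  { destruct (HVW k Hk) as [HV _]; pose proof (Cmod_ge_0 (V k)).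
    assert (0 < / knorm k ^ 2)
      by (apply Rinv_0_lt_compat, pow_lt; pose proof (knorm_ge_1 k Hk); lra).
    unfold M; repeat apply Rmult_le_pos; lra. }
  apply Rle_trans with (M * Rpower (knorm k / 2) beta).
  { eapply Rle_trans; [exact Hmod | right; unfold M; ring]. }
  apply Rle_trans with (M * (Rpower 2 (- beta) * Kbeta kappa_g beta (knorm k))).
  { apply Rmult_le_compat_l; assumption. }
  right; unfold M; ring.
Qed.
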